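(* Let $Z_1,\dots,Z_d$ be nonzero complex numbers with $|Z_1|\le\cdots\le|Z_d|$, not all of the same modulus, let $R=\min\{|Z_{i+1}|/|Z_i| : |Z_{i+1}|>|Z_i|\}$ and $I=\{i: 1\le i\le d-1,\ |Z_i|<|Z_{i+1}|\}\cup\{0,d\}$. Then for every $i\in I$, \[ \sigma_{d-i}(Z)=Z_{i+1}Z_{i+2}\cdots Z_d\,(1+c) \] for some complex $c$ with $|c|\le\left(\binom{d}{i}-1\right)R^{-1}\le 2^dR^{-1}$.
   Context: $\sigma_k(Z)=\sum_{j_1<\dots<j_k}Z_{j_1}\cdots Z_{j_k}$ denotes the $k$-th elementary symmetric function of $Z=(Z_1,\dots,Z_d)$, with $\sigma_0=1$; an empty product equals $1$. *)

From HB Require Import structures.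
From mathcomp Require Import all_boot all_order all_algebra.
Unset Printing Implicit Defensive.
Import Order.TTheory GRing.Theory Num.Theory.
Local Open Scope ring_scope.

(* Convention: the paper's Z_1, ..., Z_d are Z 0, ..., Z (d-1) (0-based). *)

Definition elem_sym {C : numClosedFieldType} (d : nat) (Z : nat -> C) (k : nat) : C :=
  \sum_(S : {set 'I_d} | #|S| == k) \prod_(j in S) Z (val j).

Definition jump_ratios {C : numClosedFieldType} (d : nat) (Z : nat -> C) : seq C :=
  [seq `|Z j.+1| / `|Z j| | j <- iota 0 d.-1 & `|Z j| < `|Z j.+1|].

Definition min_ratio {C : numClosedFieldType} (d : nat) (Z : nat -> C) : C :=
  let s := jump_ratios d Z in \big[Order.min/head 0 s]_(r <- s) r.

(* The index set I (paper indexing): i = 0, i = d, or 1 <= i <= d-1 with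
   |Z_i| < |Z_{i+1}|, i.e. |Z (i-1)| < |Z i| in 0-based indexing. *)
Definition jump_index {C : numClosedFieldType} (d : nat) (Z : nat -> C) (i : nat) : bool :=
  (i == 0)%N || (i == d) || [&& (1 <= i)%N, (i <= d.-1)%N & `|Z i.-1| < `|Z i|].

(* Let U = {i+1, ..., d}.  The term of sigma_{d-i}(Z) indexed by S = U is the
   main term; any other (d-i)-subset S trades k >= 1 indices of U, where
   |Z_j| >= |Z_{i+1}|, for k indices below it, where |Z_j| <= |Z_i|.  As i is a
   jump, |Z_{i+1}| / |Z_i| >= R, so |prod_S Z| <= R^-1 |prod_U Z|, and there are
   C(d, i) - 1 such S. *)

From HB Require Import structures.
From mathcomp Require Import all_boot all_order all_algebra.
Set Implicit Arguments.
Unset Strict Implicit.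

Import Order.TTheory GRing.Theory Num.Theory.
Local Open Scope ring_scope.

Lemma bin_leq_exp2 (n k : nat) : ('C(n, k) <= 2 ^ n)%N.
Proof.
rewrite -(card_ord n) -card_draws -cardsT -card_powerset.
by apply/subset_leq_card/subsetP => A _; rewrite powersetE subsetT.
Qed.

Lemma card_draws_neq (I : finType) (T : {set I}) :
  #|[set S : {set I} | (#|S| == #|T|) && (S != T)]| = 'C(#|I|, #|T|).-1.
Proof.
rewrite -card_draws (cardD1 T [set A : {set I} | #|A| == #|T|]) inE eqxx add1n /=.
by apply: eq_card => S; rewrite !inE; exact: andbC.
Qed.

Lemma real_bigmin_le (R : numDomainType) (x0 x : R) (s : seq R) :
  x0 \is Num.real -> {in s, forall y, y \is Num.real} -> x \in s ->
  \big[Order.min/x0]_(y <- s) y <= x.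
Proof.
move=> x0R; elim: s => [//|a s IH] sR; rewrite big_cons inE.
have s'R : {in s, forall y, y \is Num.real} by move=> y ys; rewrite sR // inE ys orbT.
have minR : \big[Order.min/x0]_(y <- s) y \is Num.real.
  by rewrite big_seq; exact: bigmin_real.
rewrite comparable_ge_min; last exact: real_comparable (sR a (mem_head a s)) minR.
by case/predU1P => [->|/(IH s'R) ->]; rewrite ?lexx ?orbT.
Qed.

Lemma norm_prod_exchange (I : finType) (R : numDomainType) (F : I -> R)
    (S T : {set I}) (m M : R) :
  #|S| = #|T| -> 0 <= M ->
  (forall j, j \in S :\: T -> `|F j| <= m) ->
  (forall j, j \in T :\: S -> M <= `|F j|) ->
  `|\prod_(j in S) F j| * M ^+ #|S :\: T| <= m ^+ #|S :\: T| * `|\prod_(j in T) F j|.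
Proof.
move=> eqST M0 leFm leMF; set k := #|S :\: T|.
have cardTS : #|T :\: S| = k.
  by apply/eqP; rewrite -(eqn_add2l #|S :&: T|) cardsID setIC cardsID eqST.
have lowS : `|\prod_(j in S :\: T) F j| <= m ^+ k.
  rewrite normr_prod -prodr_const; apply: ler_prod => j jST.
  by rewrite normr_ge0 leFm.
have upT : M ^+ k <= `|\prod_(j in T :\: S) F j|.
  rewrite normr_prod -cardTS -prodr_const; apply: ler_prod => j jTS.
  by rewrite M0 leMF.
rewrite [in X in X <= _](big_setID T) [in X in _ <= X](big_setID S) /= setIC.
rewrite !normrM -mulrA mulrCA [in X in _ <= X]mulrCA.
by rewrite mulrCA ler_wpM2l // ler_pM // exprn_ge0.
Qed.

(* The paper's indices i+1, ..., d, shifted to 0-based. *)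
Definition upper_indices (d i : nat) : {set 'I_d} := [set j : 'I_d | (i <= j)%N].

Lemma big_upper_indices {R : Type} {idx : R} {op : Monoid.law idx} (d i : nat)
    (F : nat -> R) :
  \big[op/idx]_(i <= j < d) F j = \big[op/idx]_(j in upper_indices d i) F j.
Proof. by rewrite big_geq_mkord; apply: eq_bigl => j; rewrite inE. Qed.

Lemma card_upper_indices (d i : nat) : #|upper_indices d i| = (d - i)%N.
Proof.
by rewrite -sum1_card -(big_upper_indices d i (fun=> 1%N)) sum_nat_const_nat muln1.
Qed.

Section MinRatio.
Variables (C : numClosedFieldType) (d : nat) (Z : nat -> C).

Lemma jump_ratios_ge0 : {in jump_ratios d Z, forall r, 0 <= r}.
Proof. by move=> _ /mapP[j _ ->]; rewrite divr_ge0. Qed.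

Lemma min_ratio_ge0 : 0 <= min_ratio d Z.
Proof.
rewrite /min_ratio; have := jump_ratios_ge0.
case: (jump_ratios d Z) => [|r s] s_ge0 /=; first by rewrite big_nil.
by rewrite big_seq; apply: le_bigmin => [|y /s_ge0//]; rewrite s_ge0 ?mem_head.
Qed.

Lemma min_ratio_le r : r \in jump_ratios d Z -> min_ratio d Z <= r.
Proof.
rewrite /min_ratio; have := jump_ratios_ge0.
case: (jump_ratios d Z) => [//|r0 s] s_ge0 /= r_in.
have s_real : {in r0 :: s, forall y, y \is Num.real} by move=> y /s_ge0/ger0_real.
exact: real_bigmin_le (s_real _ (mem_head _ _)) s_real r_in.
Qed.

Lemma jump_ratio_mem i :
  (0 < i < d)%N -> `|Z i.-1| < `|Z i| -> `|Z i| / `|Z i.-1| \in jump_ratios d Z.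
Proof.
case/andP=> i_gt0 i_lt_d jump; apply/mapP; exists i.-1; last by rewrite prednK.
rewrite mem_filter mem_iota prednK // jump /= add0n -ltnS prednK //.
exact: ltn_trans i_gt0 i_lt_d.
Qed.

Hypothesis Z_neq0 : forall j, (j < d)%N -> Z j != 0.

Lemma jump_ratios_gt0 : {in jump_ratios d Z, forall r, 0 < r}.
Proof.
move=> r /mapP[j]; rewrite mem_filter mem_iota add0n => /andP[lt_j /andP[_ j_lt]] ->.
rewrite ltn_predRL in j_lt.
by rewrite divr_gt0 // normr_gt0 Z_neq0 // ltnW.
Qed.

Lemma min_ratio_gt0 r : r \in jump_ratios d Z -> 0 < min_ratio d Z.
Proof.
rewrite /min_ratio; have := jump_ratios_gt0.
case: (jump_ratios d Z) => [//|r0 s] s_gt0 _ /=.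
by rewrite big_seq; apply: lt_bigmin => [|y /s_gt0//]; rewrite s_gt0 ?mem_head.
Qed.

End MinRatio.

Lemma exprn_ratio_le_inv (R : numFieldType) (m M r : R) (k : nat) :
  0 < m -> m < M -> 0 < r -> r <= M / m -> (0 < k)%N -> (m / M) ^+ k <= r^-1.
Proof.
move=> m_gt0 lt_mM r_gt0 le_r k_gt0; have M_gt0 := lt_trans m_gt0 lt_mM.
apply: (@le_trans _ _ (m / M)).
  rewrite -[leRHS]expr1 ler_wiXn2l // ?divr_ge0 ?ltW //.
  by rewrite ltr_pdivrMr // mul1r.
by rewrite -invf_div lef_pV2 ?posrE ?divr_gt0.
Qed.

Lemma jump_index_interior (C : numClosedFieldType) (d : nat) (Z : nat -> C) i :
  jump_index d Z i -> (0 < i < d)%N -> `|Z i.-1| < `|Z i|.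
Proof.
rewrite /jump_index => + /andP[i_gt0 i_lt_d].
by rewrite (gtn_eqF i_gt0) (ltn_eqF i_lt_d) => /and3P[].
Qed.

Section UpperIndices.
Variables (C : numClosedFieldType) (d : nat) (Z : nat -> C).
Hypothesis Z_neq0 : forall j, (j < d)%N -> Z j != 0.
Hypothesis Z_sorted : forall j k, (j <= k)%N -> (k < d)%N -> `|Z j| <= `|Z k|.

Lemma norm_prod_le_upper (i : nat) (S : {set 'I_d}) :
    jump_index d Z i -> #|S| = #|upper_indices d i| -> S != upper_indices d i ->
  `|\prod_(j in S) Z j| <= (min_ratio d Z)^-1 * `|\prod_(j in upper_indices d i) Z j|.
Proof.
set U := upper_indices d i => jump_i eq_card neq_SU.
have [a aS aU] : exists2 a, a \in S & a \notin U.
  by apply/subsetPn; apply: contra neq_SU => /(subset_cardP eq_card)/setP->.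
have [b bU bS] : exists2 b, b \in U & b \notin S.
  by apply/subsetPn; apply: contra neq_SU => /(subset_cardP (esym eq_card))/setP->.
move: aU bU; rewrite !inE -ltnNge => a_lt_i i_le_b.
have i_gt0 : (0 < i)%N by apply: leq_ltn_trans a_lt_i.
have i_lt_d : (i < d)%N by apply: leq_ltn_trans i_le_b (ltn_ord b).
have i1_lt_d : (i.-1 < d)%N by apply: leq_ltn_trans (leq_pred i) i_lt_d.
have jump : `|Z i.-1| < `|Z i| by apply: (jump_index_interior jump_i); rewrite i_gt0.
set m := `|Z i.-1|; set M := `|Z i|.
have m_gt0 : 0 < m by rewrite normr_gt0 Z_neq0.
have ratio_in : M / m \in jump_ratios d Z by apply: jump_ratio_mem; rewrite ?i_gt0.
set k := #|S :\: U|.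
have k_gt0 : (0 < k)%N by apply/card_gt0P; exists a; rewrite !inE aS -ltnNge a_lt_i.
have exchange : `|\prod_(j in S) Z j| * M ^+ k <= m ^+ k * `|\prod_(j in U) Z j|.
  apply: norm_prod_exchange => // [|j|j]; first exact: ltW (lt_trans m_gt0 jump).
    by rewrite !inE -ltnNge => /andP[j_lt_i _]; rewrite Z_sorted // -ltnS prednK.
  by rewrite !inE => /andP[_ i_le_j]; rewrite Z_sorted.
have R_gt0 := min_ratio_gt0 Z_neq0 ratio_in.
have q_le := exprn_ratio_le_inv m_gt0 jump R_gt0 (min_ratio_le ratio_in) k_gt0.
rewrite (le_trans _ (ler_wpM2r (normr_ge0 _) q_le)) // expr_div_n mulrAC.
by rewrite ler_pdivlMr ?exprn_gt0 ?(lt_trans m_gt0 jump).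
Qed.

End UpperIndices.

Theorem mainTheorem3 (C : numClosedFieldType) (d : nat) (Z : nat -> C)
  (hnz : forall j, (j < d)%N -> Z j != 0)
  (hsort : forall j k, (j <= k)%N -> (k < d)%N -> `|Z j| <= `|Z k|)
  (hnot : exists j k, [/\ (j < d)%N, (k < d)%N & `|Z j| != `|Z k|]) :
  forall i : nat, (i <= d)%N -> jump_index d Z i ->
  exists c : C,
    [/\ elem_sym d Z (d - i) = (\prod_(i <= j < d) Z j) * (1 + c),
        `|c| <= ('C(d, i).-1)%:R / min_ratio d Z
      & ('C(d, i).-1)%:R / min_ratio d Z <= 2 ^+ d / min_ratio d Z].
Proof.
move=> i i_le_d jump_i; set U := upper_indices d i.
have cardU : #|U| = (d - i)%N := card_upper_indices d i.
have PU_neq0 : \prod_(j in U) Z j != 0 by apply/prodf_neq0 => j _; exact: hnz.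
have card_rest : #|[pred S : {set 'I_d} | (#|S| == (d - i)%N) && (S != U)]| = 'C(d, i).-1.
  rewrite -bin_sub // -cardU -[d in 'C(d, _)]card_ord -card_draws_neq.
  by apply: eq_card => S; rewrite !inE; exact: erefl.
rewrite big_upper_indices /elem_sym (bigD1 U) /=; last by rewrite cardU.
set rest := \sum_(S | _) _.
exists (rest / \prod_(j in U) Z j); split.
- by rewrite mulrDr mulr1 mulrCA divff // mulr1.
- have bound (S : {set 'I_d}) : (#|S| == (d - i)%N) && (S != U) ->
      `|\prod_(j in S) Z j| <= (min_ratio d Z)^-1 * `|\prod_(j in U) Z j|.
    by case/andP => /eqP cardS neq_SU; rewrite norm_prod_le_upper // cardS.
  rewrite normf_div ler_pdivrMr ?normr_gt0 //.
  apply: le_trans (ler_norm_sum _ _ _) _; apply: le_trans (ler_sum _ bound) _.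
  by rewrite sumr_const card_rest -[leLHS]mulr_natl mulrA.
- rewrite ler_wpM2r ?invr_ge0 ?min_ratio_ge0 // -natrX ler_nat.
  exact: leq_trans (leq_pred _) (bin_leq_exp2 d i).
Qed.
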